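(* Fix a positive integer $s$, and let $h_{s,i,j}$ and $H_i(x)=\sum_{j\ge i+1}h_{s,i,j}x^j$ be as in the context. Then for every integer $0\le i\le 2s-1$, $$H_i=\sum_{j=0}^{i}(-1)^{j+1}\binom{s}{j}x^j+(-1)^{i+1}\binom{2s}{i}\frac{x^{i+1}}{(1-x)^{s+1}}+(-1)^i(2s-i)\binom{2s}{i}\sum_{t=0}^{i}(-1)^t\binom{i}{t}\frac{1}{2s-t}\frac{1}{(1-x)^{s-t}},$$ as an identity of formal power series (equivalently of rational functions) in $x$.
   Context: For a fixed positive integer $s$, the numbers $h_{s,i,j}$ (integers $i\ge 0$, $j$) are defined recursively by: $h_{s,i,j}=0$ if $j\le i$; for $i=0$ and $j\ge 1$, $h_{s,0,j}=\binom{s+j-1}{j}\frac{s-j}{s}$; for $i>0$ and $j>i$, $h_{s,i,j}=-\frac{s-j+1}{i}h_{s,i-1,j-1}-\frac{j-i}{i}h_{s,i-1,j}$. $H_i(x)=\sum_{j\ge i+1}h_{s,i,j}x^j$. *)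

From mathcomp Require Import all_boot all_order all_algebra.
Set Implicit Arguments. Unset Strict Implicit. Unset Printing Implicit Defensive.
Import Order.TTheory GRing.Theory Num.Theory.
Local Open Scope ring_scope.

Fixpoint h (s i j : nat) : rat :=
  match i with
  | 0 => if (j <= 0)%N then 0
         else 'C(s + j - 1, j)%:R * ((s%:R - j%:R) / s%:R)
  | i'.+1 => if (j <= i'.+1)%N then 0
         else - ((s%:R - j%:R + 1) / i'.+1%:R) * h s i' j.-1
              - ((j%:R - i'.+1%:R) / i'.+1%:R) * h s i' j
  end.

Definition fps := nat -> rat.

Definition H (s i : nat) : fps := fun n => if (i.+1 <= n)%N then h s i n else 0.

Definition fps_one : fps := fun n => (n == 0%N)%:R.
Definition fps_Xn (j : nat) : fps := fun n => (n == j)%:R.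
Definition fps_mul (a b : fps) : fps :=
  fun n => \sum_(k < n.+1) a k * b (n - k)%N.
Definition fps_pow (a : fps) (m : nat) : fps := iter m (fps_mul a) fps_one.

(* formal inverse of a series (meaningful when a 0 != 0):
   b_0 = 1/a_0, b_n = -(1/a_0) sum_{k=1}^n a_k b_{n-k} *)
Fixpoint inv_seq (a : fps) (n : nat) : seq rat :=
  match n with
  | 0 => [:: (a 0%N)^-1]
  | n'.+1 => let bs := inv_seq a n' in
      rcons bs (- (a 0%N)^-1 * \sum_(k < n'.+1) a k.+1 * nth 0 bs (n' - k)%N)
  end.
Definition fps_inv (a : fps) : fps := fun n => nth 0 (inv_seq a n) n.

Definition fps_zpow (a : fps) (z : int) : fps :=
  match z with
  | Posz m => fps_pow a m
  | Negz m => fps_inv (fps_pow a m.+1)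
  end.

Definition one_minus_x : fps :=
  fun n => if n == 0%N then 1 else if n == 1%N then -1 else 0.

(* The recursion defining h says k H_k = L_k H_(k-1) for the operator
   L_k F = k F - x (1 - x) F' - s x F, whose action on coefficients is [rec_op s k].
   Each of the three parts of the right-hand side obeys the same recursion:
   L_k acts on the polynomial part through the absorption identity for C(s, j),
   sends x^k (1 - x)^(-s-1) to a multiple of x^(k+1) (1 - x)^(-s-1), and sends
   (1 - x)^(-c) to a combination of (1 - x)^(-c) and (1 - x)^(1-c), after which
   Pascal's rule for C(k, t) reassembles the sum over t. Both sides agree for
   k = 0, so induction on k concludes; the bound i <= 2s - 1 keeps the
   denominators 2s - t nonzero. *)

From mathcomp Require Import all_boot all_order all_algebra.
From mathcomp Require Import ring lra zify.
Import Order.TTheory GRing.Theory Num.Theory.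
Set Implicit Arguments. Unset Strict Implicit. Unset Printing Implicit Defensive.
Local Open Scope ring_scope.

Ltac natr_neq0 := repeat (apply/andP; split); rewrite ?natr1 ?nat1r ?pnatr_eq0 //.

Section Multichoose.
Variable R : numFieldType.
Implicit Types (c : R) (n : nat).

(* (1 - x)^(-c) = \sum_n multichoose c n x^n *)
Fixpoint multichoose c n : R :=
  if n is m.+1 then multichoose c m * (c + m%:R) / m.+1%:R else 1.

Arguments multichoose : simpl never.

Lemma multichoose0 c : multichoose c 0 = 1.
Proof. by []. Qed.

Lemma multichooseS c n :
  multichoose c n.+1 = multichoose c n * (c + n%:R) / n.+1%:R.
Proof. by []. Qed.

Lemma mul_multichoose_diag c n :
  n.+1%:R * multichoose c n.+1 = (c + n%:R) * multichoose c n.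
Proof. by rewrite multichooseS; field; natr_neq0. Qed.

Lemma multichoose0n n : multichoose 0 n = (n == 0)%:R.
Proof.
elim: n => // n IH; rewrite multichooseS IH add0r.
by case: n {IH} => [|n]; rewrite ?mulr0 ?mul0r.
Qed.

Lemma multichoose_pascal c n :
  multichoose (c - 1) n = multichoose c n - (if n is m.+1 then multichoose c m else 0).
Proof.
elim: n => [|[|m] IH]; first by rewrite subr0.
  by rewrite !multichooseS; field.
rewrite multichooseS IH (multichooseS c m.+1) (multichooseS c m) -!natr1.
by field; natr_neq0.
Qed.

Lemma multichoose_nat k n : multichoose k%:R n = 'C(k + n - 1, n)%:R.
Proof.
elim: n => [|n IH]; first by rewrite bin0.
apply: (@mulfI _ n.+1%:R); first by rewrite pnatr_eq0.
have -> : (k + n.+1 - 1 = k + n)%N by rewrite addnS subn1.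
by rewrite mul_multichoose_diag IH -!natrD -!natrM -mul_bin_diag subn1.
Qed.

Lemma multichoose_vandermonde a b n :
  \sum_(k < n.+1) multichoose a k * multichoose b (n - k) = multichoose (a + b) n.
Proof.
elim: n => [|n IH]; first by rewrite big_ord1 mulr1.
apply: (@mulfI _ n.+1%:R); first by rewrite pnatr_eq0.
rewrite mul_multichoose_diag -IH mulr_sumr.
transitivity (\sum_(k < n.+2) (k%:R * multichoose a k * multichoose b (n.+1 - k)
    + multichoose a k * ((n.+1 - k)%N%:R * multichoose b (n.+1 - k)))).
  by apply: eq_bigr => k _; rewrite natrB ?(ltnSE (ltn_ord k)); ring.
rewrite big_split /= big_ord_recl /= mulr0n !mul0r add0r.
rewrite [X in _ + X]big_ord_recr /= subnn mul0r mulr0 addr0.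
rewrite mulr_sumr -big_split; apply: eq_bigr => k _.
have k_le := ltnSE (ltn_ord k).
rewrite /= /bump add1n subSS mul_multichoose_diag subSn //.
by rewrite mul_multichoose_diag natrB //; ring.
Qed.

End Multichoose.

Lemma natr_bin_succ (R : numFieldType) n m :
  'C(n, m.+1)%:R = (n%:R - m%:R) * 'C(n, m)%:R / m.+1%:R :> R.
Proof.
apply: (@mulIf _ m.+1%:R); first by rewrite pnatr_eq0.
rewrite divfK ?pnatr_eq0 // mulrC; case: (leqP m n) => [le_mn|lt_nm].
  by rewrite -natrB // -!natrM mul_bin_left.
by rewrite !bin_small ?mulr0 // ltnW.
Qed.

Lemma sum_delta (R : pzRingType) (F : nat -> R) (i n : nat) :
  \sum_(j < n) (j == i :> nat)%:R * F j = if (i < n)%N then F i else 0.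
Proof.
rewrite -(big_ord1_eq +%R F) [RHS]big_mkcond; apply: eq_bigr => j _.
by case: eqP; rewrite ?mul1r ?mul0r.
Qed.

Lemma fps_mul_Xn j F n :
  fps_mul (fps_Xn j) F n = if (j <= n)%N then F (n - j)%N else 0.
Proof. by rewrite /fps_mul /fps_Xn (@sum_delta _ (fun k => F (n - k)%N)). Qed.

Lemma fps_mul_one_minus_x F n :
  fps_mul one_minus_x F n = F n - (if n is m.+1 then F m else 0).
Proof.
rewrite /fps_mul; case: n => [|m]; first by rewrite big_ord1 mul1r subr0.
rewrite 2!big_ord_recl big1 => [|k _]; last by rewrite !lift0 mul0r.
by rewrite addr0 mul1r mulN1r subn0 subSS subn0.
Qed.

Lemma fps_pow_one_minus_x m n : fps_pow one_minus_x m n = multichoose (- m%:R) n.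
Proof.
elim: m n => [|m IH] n; first by rewrite oppr0 multichoose0n.
rewrite /fps_pow iterS -/(fps_pow _ m) fps_mul_one_minus_x -natr1 opprD.
by rewrite multichoose_pascal; case: n => [|n]; rewrite !IH.
Qed.

Lemma fps_inv_unique a b : a 0%N != 0 ->
  (forall n, fps_mul a b n = fps_one n) -> forall n, fps_inv a n = b n.
Proof.
move=> a0 ab1.
suff inv_seqE n : inv_seq a n = mkseq b n.+1.
  by move=> n; rewrite /fps_inv inv_seqE nth_mkseq.
elim: n => [|n IH] /=.
  have := ab1 0%N; rewrite /fps_mul big_ord1 => ab1_0.
  by congr [:: _]; apply: (mulfI a0); rewrite ab1_0 divff.
rewrite IH (mkseqS b n.+1); congr rcons.
have := ab1 n.+1; rewrite /fps_mul big_ord_recl subn0 => /eqP.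
rewrite addr_eq0 => /eqP ab1_n.
rewrite -[RHS](mulKf a0) ab1_n mulrN -mulNr; congr (_ * _); apply: eq_bigr => k _.
by rewrite lift0 subSS nth_mkseq // ltnS leq_subr.
Qed.

Lemma fps_inv_multichoose a c : (forall n, a n = multichoose c n) ->
  forall n, fps_inv a n = multichoose (- c) n.
Proof.
move=> aE; apply: fps_inv_unique => [|n]; first by rewrite aE multichoose0 oner_neq0.
rewrite /fps_mul /fps_one -multichoose0n -[X in multichoose X n](addrN c).
rewrite -multichoose_vandermonde.
by apply: eq_bigr => k _; rewrite aE.
Qed.

Lemma fps_inv_zpow_one_minus_x z n :
  fps_inv (fps_zpow one_minus_x z) n = multichoose z%:~R n.
Proof.
have pow_inv m := fps_inv_multichoose (fps_pow_one_minus_x m).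
case: z => m /=; first by rewrite pow_inv opprK.
by rewrite (fps_inv_multichoose (pow_inv m.+1)) NegzE opprK mulrNz.
Qed.

Definition rec_op (s k : nat) (F : fps) : fps := fun n =>
  (k%:R - n%:R) * F n - (s%:R - n%:R + 1) * (if n is m.+1 then F m else 0).

Lemma rec_opD s k F G n :
  rec_op s k (fun m => F m + G m) n = rec_op s k F n + rec_op s k G n.
Proof. by rewrite /rec_op; case: n => [|m]; ring. Qed.

Lemma rec_op_sum s k m (c : nat -> rat) (G : nat -> fps) n :
  rec_op s k (fun j => \sum_(t < m) c t * G t j) n =
  \sum_(t < m) c t * rec_op s k (G t) n.
Proof.
rewrite /rec_op; case: n => [|n]; rewrite ?mulr0 ?subr0 !mulr_sumr -?sumrB;
  by apply: eq_bigr => t _; ring.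
Qed.

Lemma eq_rec_op s k F G : F =1 G -> rec_op s k F =1 rec_op s k G.
Proof. by move=> FG n; rewrite /rec_op; case: n => [|m]; rewrite !FG. Qed.

Lemma rec_op_multichoose s k c n :
  rec_op s k (multichoose c) n =
  (k%:R - s%:R - c) * multichoose c n + (s%:R + c) * multichoose (c - 1) n.
Proof.
rewrite multichoose_pascal /rec_op; case: n => [|m]; first by ring.
by rewrite multichooseS -natr1; field; natr_neq0.
Qed.

Lemma H_succ s i n : i.+1%:R * H s i.+1 n = rec_op s i.+1 (H s i) n.
Proof.
rewrite /rec_op /H; case: n => [|m]; first by rewrite !mulr0 subrr.
rewrite !ltnS; case: (ltngtP i m) => [lt_im|lt_mi|<-].
- by rewrite [h s i.+1 m.+1]/= ltnS leqNgt lt_im /=; field; natr_neq0.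
- by rewrite !mulr0 subrr.
- by rewrite subrr mul0r !mulr0 subrr.
Qed.

Definition poly_part s k : fps := fun n =>
  if (n <= k)%N then (-1) ^+ n.+1 * 'C(s, n)%:R else 0.

Definition pole_part s k : fps := fun n =>
  (-1) ^+ k.+1 * 'C(2 * s, k)%:R *
  (if (k < n)%N then multichoose s.+1%:R (n - k.+1) else 0).

Definition sum_part_coef s k t : rat :=
  (-1) ^+ k * (2 * s - k)%:R * 'C(2 * s, k)%:R *
  ((-1) ^+ t * 'C(k, t)%:R * (1 / (2 * s - t)%:R)).

Definition sum_part s k : fps := fun n =>
  \sum_(t < k.+1) sum_part_coef s k t * multichoose (s%:R - t%:R) n.

Lemma poly_part_succ s i n :
  i.+1%:R * poly_part s i.+1 n = rec_op s i.+1 (poly_part s i) n.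
Proof.
rewrite /rec_op /poly_part; case: n => [|m]; first by rewrite !mulr0 !subr0.
rewrite !ltnS; case: (ltngtP m i) => [lt_mi|lt_im|->].
- by rewrite natr_bin_succ !exprS; field; natr_neq0.
- by rewrite !mulr0 subrr.
- by rewrite natr_bin_succ !exprS; field; natr_neq0.
Qed.

Lemma pole_part_succ s i n :
  i.+1%:R * pole_part s i.+1 n = rec_op s i.+1 (pole_part s i) n.
Proof.
rewrite /rec_op /pole_part; case: n => [|m]; first by rewrite !mulr0 subrr.
rewrite !ltnS; case: (ltngtP i m) => [lt_im|lt_mi|->].
- have [k ->] : exists k, m = (k + i.+1)%N by exists (m - i.+1)%N; rewrite subnK.
  have -> : ((k + i.+1).+1 - i.+2 = k)%N by lia.
  have -> : ((k + i.+1).+1 - i.+1 = k.+1)%N by lia.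
  rewrite addnK multichooseS natr_bin_succ natrM -!natr1 !natrD -!natr1 !exprS.
  by field; natr_neq0.
- by rewrite !mulr0 subrr.
- by rewrite subrr mul0r !mulr0 subrr.
Qed.

Lemma sum_part_coef_succ s i u : (i.+1 < 2 * s)%N -> (u <= i.+1)%N ->
  i.+1%:R * sum_part_coef s i.+1 u =
    sum_part_coef s i u * (i.+1%:R - s%:R - (s%:R - u%:R))
  + (if u is t.+1 then sum_part_coef s i t * (s%:R + (s%:R - t%:R)) else 0).
Proof.
move=> lt_i2s le_ui; rewrite /sum_part_coef.
have lt_i2s_R : i%:R + 2 <= 2 * s%:R :> rat.
  by rewrite -natrM -natrD ler_nat addn2.
have i_ge0 : 0 <= i%:R :> rat by [].
case: u le_ui => [|t] le_ui.
  rewrite !bin0 subn0 natr_bin_succ !natrB; try lia.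
  rewrite natrM !exprS !expr0 -!natr1 subr0; field.
  by repeat (apply/andP; split); apply/eqP => e; lra.
have le_ti_R : t%:R <= i%:R :> rat by rewrite ler_nat.
have t_ge0 : 0 <= t%:R :> rat by [].
rewrite binS natrD !natr_bin_succ !natrB; try lia.
rewrite natrM !exprS -!natr1; field.
by repeat (apply/andP; split); apply/eqP => e; lra.
Qed.

Lemma sum_part_succ s i n : (i.+1 < 2 * s)%N ->
  i.+1%:R * sum_part s i.+1 n = rec_op s i.+1 (sum_part s i) n.
Proof.
move=> lt_i2s; rewrite /sum_part mulr_sumr.
rewrite (rec_op_sum _ _ _ _ (fun t => multichoose (s%:R - t%:R))).
under [RHS]eq_bigr => t _ do rewrite rec_op_multichoose mulrDr.
rewrite big_split /=.
transitivity (\sum_(u < i.+2)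
    (sum_part_coef s i u * (i.+1%:R - s%:R - (s%:R - u%:R))
       * multichoose (s%:R - u%:R) n
     + (if (u : nat) is t.+1
        then sum_part_coef s i t * (s%:R + (s%:R - t%:R)) else 0)
       * multichoose (s%:R - u%:R) n)).
  apply: eq_bigr => u _; rewrite mulrA sum_part_coef_succ ?mulrDl //.
  exact: ltnSE (ltn_ord u).
rewrite big_split /=; congr (_ + _).
  rewrite big_ord_recr /= {2}/sum_part_coef (bin_small (ltnSn i)).
  rewrite !(mulr0, mul0r) addr0.
  by apply: eq_bigr => t _; rewrite mulrA.
rewrite big_ord_recl mul0r add0r; apply: eq_bigr => t _.
by rewrite lift0 -natr1 opprD [in multichoose _ _]addrA mulrA.
Qed.

Definition H_closed s k : fps := fun n =>
  poly_part s k n + pole_part s k n + sum_part s k n.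

Lemma H_closed_succ s i n : (i.+1 < 2 * s)%N ->
  i.+1%:R * H_closed s i.+1 n = rec_op s i.+1 (H_closed s i) n.
Proof.
move=> lt_i2s; rewrite /H_closed !rec_opD !mulrDr.
by rewrite poly_part_succ pole_part_succ sum_part_succ.
Qed.

Lemma H_closed0 s n : (0 < s)%N -> H s 0 n = H_closed s 0 n.
Proof.
move=> s_gt0; have s_neq0 : s%:R != 0 :> rat by rewrite pnatr_eq0 -lt0n.
rewrite /H_closed /poly_part /pole_part /sum_part /sum_part_coef /H big_ord1.
rewrite subr0 !subn0 !bin0 !multichoose_nat natrM; case: n => [|m] /=; rewrite ?bin0.
  by field.
have -> : (s.+1 + (m.+1 - 1) - 1 = s + m)%N by lia.
have -> : (s + m.+1 - 1 = s + m)%N by lia.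
rewrite subSS subn0 natr_bin_succ natrD -natr1.
by field; rewrite s_neq0 andbT natr1 pnatr_eq0.
Qed.

Lemma H_closedE s i : (0 < s)%N -> (i <= 2 * s - 1)%N -> H s i =1 H_closed s i.
Proof.
move=> s_gt0; elim: i => [|i IH] le_i n; first exact: H_closed0.
apply: (@mulfI _ i.+1%:R); first by rewrite pnatr_eq0.
rewrite H_succ H_closed_succ; last by lia.
by apply: eq_rec_op; apply: IH; lia.
Qed.

Theorem proposition1 (s i : nat) (hs : (0 < s)%N) (hi : (i <= 2 * s - 1)%N) :
  forall n : nat,
  H s i n =
    \sum_(j < i.+1) (-1) ^+ j.+1 * 'C(s, j)%:R * fps_Xn j n
  + (-1) ^+ i.+1 * 'C(2 * s, i)%:R *
      fps_mul (fps_Xn i.+1) (fps_inv (fps_pow one_minus_x s.+1)) n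
  + (-1) ^+ i * (2 * s - i)%:R * 'C(2 * s, i)%:R *
      \sum_(t < i.+1) (-1) ^+ t * 'C(i, t)%:R * (1 / (2 * s - t)%:R) *
         fps_inv (fps_zpow one_minus_x (s%:Z - t%:Z)) n.
Proof.
move=> n; rewrite H_closedE // /H_closed /poly_part /pole_part /sum_part.
congr (_ + _ * _ + _).
- under eq_bigr => j _ do rewrite /fps_Xn eq_sym mulrC.
  by rewrite (@sum_delta _ (fun j => (-1) ^+ j.+1 * 'C(s, j)%:R)) ltnS.
- by rewrite fps_mul_Xn (fps_inv_multichoose (fps_pow_one_minus_x _)) opprK.
rewrite mulr_sumr; apply: eq_bigr => t _.
by rewrite fps_inv_zpow_one_minus_x intrB /sum_part_coef !mulrA.
Qed.
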